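(* Let ${\mathbf{X}}\in\mathbb{R}_+^{m\times n}$, let ${\mathbf{A}}\in\mathbb{R}^{k\times m}$ be arbitrary, let $\lambda\in[0,1]$ and $\sigma\ge\max_{a,b}\big(({\mathbf{A}}^T{\mathbf{A}})_{ab}\big)_-$. Then for entrywise nonnegative ${\mathbf{U}}\in\mathbb{R}^{m\times r}$, ${\mathbf{V}}\in\mathbb{R}^{n\times r}$ (with denominators below entrywise positive), the objective $$\|{\mathbf{A}}({\mathbf{X}}-{\mathbf{U}}{\mathbf{V}}^T)\|_F^2+\lambda\|{\mathbf{U}}{\mathbf{V}}^T\|_F^2+\sigma\|\mathbf{1}^T({\mathbf{X}}-{\mathbf{U}}{\mathbf{V}}^T)\|_2^2$$ does not increase under each of the updates $${\mathbf{U}}\leftarrow{\mathbf{U}}\circ\frac{{\mathbf{A}}^T{\mathbf{A}}{\mathbf{X}}{\mathbf{V}}+\sigma\mathbf{1}\mathbf{1}^T{\mathbf{X}}{\mathbf{V}}}{{\mathbf{A}}^T{\mathbf{A}}{\mathbf{U}}{\mathbf{V}}^T{\mathbf{V}}+\sigma\mathbf{1}\mathbf{1}^T{\mathbf{U}}{\mathbf{V}}^T{\mathbf{V}}+\lambda{\mathbf{U}}{\mathbf{V}}^T{\mathbf{V}}},\qquad {\mathbf{V}}\leftarrow{\mathbf{V}}\circ\frac{{\mathbf{X}}^T{\mathbf{A}}^T{\mathbf{A}}{\mathbf{U}}+\sigma{\mathbf{X}}^T\mathbf{1}\mathbf{1}^T{\mathbf{U}}}{{\mathbf{V}}{\mathbf{U}}^T{\mathbf{A}}^T{\mathbf{A}}{\mathbf{U}}+\sigma{\mathbf{V}}{\mathbf{U}}^T\mathbf{1}\mathbf{1}^T{\mathbf{U}}+\lambda{\mathbf{V}}{\mathbf{U}}^T{\mathbf{U}}},$$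 and the updated factors remain entrywise nonnegative.
   Context: $\mathbf{1}\in\mathbb{R}^m$ is the all-ones vector; $(x)_-=-\min(x,0)$; $\circ$ is entrywise product and the fraction bar is entrywise division; $\mathbb{R}_+^{m\times n}$ denotes entrywise nonnegative matrices. $\|\cdot\|_F$ is the Frobenius norm, $\|\cdot\|_2$ the Euclidean norm. *)

From mathcomp Require Import all_boot all_order all_algebra.
Set Implicit Arguments. Unset Strict Implicit. Unset Printing Implicit Defensive.
Import Order.TTheory GRing.Theory Num.Theory.
Local Open Scope ring_scope.

Definition negpart {R : realDomainType} (x : R) : R := - Num.min x 0.

Definition frob2 {R : pzRingType} {p q : nat} (M : 'M[R]_(p, q)) : R :=
  \sum_(i < p) \sum_(j < q) M i j ^+ 2.

Definition mx_nonneg {R : numDomainType} {p q : nat} (M : 'M[R]_(p, q)) : Prop :=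
  forall i j, 0 <= M i j.
Definition mx_pos {R : numDomainType} {p q : nat} (M : 'M[R]_(p, q)) : Prop :=
  forall i j, 0 < M i j.

Definition ones {R : pzRingType} (p : nat) : 'cV[R]_p := const_mx 1.

Definition hadamard {R : pzRingType} {p q : nat} (M N : 'M[R]_(p, q)) : 'M[R]_(p, q) :=
  \matrix_(i, j) (M i j * N i j).
Definition ediv {R : fieldType} {p q : nat} (M N : 'M[R]_(p, q)) : 'M[R]_(p, q) :=
  \matrix_(i, j) (M i j / N i j).


Definition objective {R : realFieldType} {k m n r : nat}
  (A : 'M[R]_(k, m)) (X : 'M[R]_(m, n)) (lam sigma : R)
  (U : 'M[R]_(m, r)) (V : 'M[R]_(n, r)) : R :=
  frob2 (A *m (X - U *m V^T)) + lam * frob2 (U *m V^T)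
  + sigma * frob2 ((ones m)^T *m (X - U *m V^T)).

Definition numU {R : realFieldType} {k m n r : nat}
  (A : 'M[R]_(k, m)) (X : 'M[R]_(m, n)) (lam sigma : R)
  (U : 'M[R]_(m, r)) (V : 'M[R]_(n, r)) : 'M[R]_(m, r) :=
  A^T *m A *m X *m V + sigma *: (ones m *m (ones m)^T *m X *m V).
Definition denU {R : realFieldType} {k m n r : nat}
  (A : 'M[R]_(k, m)) (X : 'M[R]_(m, n)) (lam sigma : R)
  (U : 'M[R]_(m, r)) (V : 'M[R]_(n, r)) : 'M[R]_(m, r) :=
  A^T *m A *m U *m V^T *m V + sigma *: (ones m *m (ones m)^T *m U *m V^T *m V)
  + lam *: (U *m V^T *m V).
Definition updU {R : realFieldType} {k m n r : nat}
  (A : 'M[R]_(k, m)) (X : 'M[R]_(m, n)) (lam sigma : R)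
  (U : 'M[R]_(m, r)) (V : 'M[R]_(n, r)) : 'M[R]_(m, r) :=
  hadamard U (ediv (numU A X lam sigma U V) (denU A X lam sigma U V)).

Definition numV {R : realFieldType} {k m n r : nat}
  (A : 'M[R]_(k, m)) (X : 'M[R]_(m, n)) (lam sigma : R)
  (U : 'M[R]_(m, r)) (V : 'M[R]_(n, r)) : 'M[R]_(n, r) :=
  X^T *m A^T *m A *m U + sigma *: (X^T *m ones m *m (ones m)^T *m U).
Definition denV {R : realFieldType} {k m n r : nat}
  (A : 'M[R]_(k, m)) (X : 'M[R]_(m, n)) (lam sigma : R)
  (U : 'M[R]_(m, r)) (V : 'M[R]_(n, r)) : 'M[R]_(n, r) :=
  V *m U^T *m A^T *m A *m U + sigma *: (V *m U^T *m ones m *m (ones m)^T *m U)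
  + lam *: (V *m U^T *m U).
Definition updV {R : realFieldType} {k m n r : nat}
  (A : 'M[R]_(k, m)) (X : 'M[R]_(m, n)) (lam sigma : R)
  (U : 'M[R]_(m, r)) (V : 'M[R]_(n, r)) : 'M[R]_(n, r) :=
  hadamard V (ediv (numV A X lam sigma U V) (denV A X lam sigma U V)).

(* The objective is, up to a constant, a quadratic form
   [Y |-> <Y, L Y P> - 2 <Y, B>] in the updated factor Y, with L and P
   symmetric and entrywise nonnegative: for U one takes
   L = A^T A + sigma 1 1^T + lam I, P = V^T V, and for V one takes L = I,
   P = U^T L U.  The hypothesis on sigma is exactly what makes
   A^T A + sigma 1 1^T nonnegative.  For such a quadratic, the multiplicative
   update Y = U o B / (L U P) cannot increase its value: expanding <Y, L Y P>
   with Y = U o t, the weights U_ai L_ab U_bj P_ji are nonnegative and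
   symmetric in (a,i) <-> (b,j), so t_ai t_bj may be replaced by t_ai^2, and
   what remains is entrywise U (D - B)^2 / D >= 0 with D = L U P. *)

From mathcomp Require Import all_boot all_order all_algebra.
From mathcomp Require Import ring lra.
Import Order.TTheory GRing.Theory Num.Theory.
Local Open Scope ring_scope.

Section MultiplicativeUpdate.
Context {R : realFieldType}.

Definition mxdot {p q : nat} (Y Z : 'M[R]_(p, q)) : R := \tr (Y^T *m Z).

Lemma mxdotE p q (Y Z : 'M[R]_(p, q)) : mxdot Y Z = \sum_a \sum_i Y a i * Z a i.
Proof.
rewrite /mxdot /mxtrace exchange_big /=; apply: eq_bigr => i _.
by rewrite mxE; apply: eq_bigr => a _; rewrite mxE.
Qed.

Lemma mxdotC p q (Y Z : 'M[R]_(p, q)) : mxdot Y Z = mxdot Z Y.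
Proof. by rewrite /mxdot -mxtrace_tr trmx_mul trmxK. Qed.

Lemma mxdot_mull p p' q (M : 'M[R]_(p', p)) (Y : 'M[R]_(p, q)) Z :
  mxdot (M *m Y) Z = mxdot Y (M^T *m Z).
Proof. by rewrite /mxdot trmx_mul mulmxA. Qed.

Lemma mxdot_mulr p q q' (N : 'M[R]_(q, q')) (Y : 'M[R]_(p, q)) Z :
  mxdot (Y *m N) Z = mxdot Y (Z *m N^T).
Proof. by rewrite /mxdot trmx_mul -mulmxA mxtrace_mulC mulmxA. Qed.

Lemma mxdot_trl p q (Y : 'M[R]_(q, p)) (Z : 'M[R]_(p, q)) :
  mxdot Y^T Z = mxdot Y Z^T.
Proof. by rewrite /mxdot trmxK -mxtrace_tr trmx_mul mxtrace_mulC. Qed.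

Lemma mxdotDr p q (Y Z1 Z2 : 'M[R]_(p, q)) :
  mxdot Y (Z1 + Z2) = mxdot Y Z1 + mxdot Y Z2.
Proof. by rewrite /mxdot mulmxDr mxtraceD. Qed.

Lemma mxdotZr p q (Y Z : 'M[R]_(p, q)) a : mxdot Y (a *: Z) = a * mxdot Y Z.
Proof. by rewrite /mxdot -scalemxAr mxtraceZ. Qed.

Lemma mxdotNr p q (Y Z : 'M[R]_(p, q)) : mxdot Y (- Z) = - mxdot Y Z.
Proof. by rewrite -scaleN1r mxdotZr mulN1r. Qed.

Lemma mxdotDl p q (Y1 Y2 Z : 'M[R]_(p, q)) :
  mxdot (Y1 + Y2) Z = mxdot Y1 Z + mxdot Y2 Z.
Proof. by rewrite mxdotC mxdotDr; congr (_ + _); apply: mxdotC. Qed.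

Lemma mxdotNl p q (Y Z : 'M[R]_(p, q)) : mxdot (- Y) Z = - mxdot Y Z.
Proof. by rewrite mxdotC mxdotNr mxdotC. Qed.

Lemma frob2_mxdot p q (M : 'M[R]_(p, q)) : frob2 M = mxdot M M.
Proof.
by rewrite mxdotE /frob2; apply: eq_bigr => a _; apply: eq_bigr => i _; rewrite expr2.
Qed.

Lemma mx_nonneg_mul p q s (M : 'M[R]_(p, q)) (N : 'M[R]_(q, s)) :
  mx_nonneg M -> mx_nonneg N -> mx_nonneg (M *m N).
Proof. by move=> M0 N0 i j; rewrite mxE; apply: sumr_ge0 => l _; apply: mulr_ge0. Qed.

Lemma mx_nonneg_tr p q (M : 'M[R]_(p, q)) : mx_nonneg M -> mx_nonneg M^T.
Proof. by move=> M0 i j; rewrite mxE. Qed.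

Lemma mx_nonneg_scalar p (a : R) : 0 <= a -> mx_nonneg (a%:M : 'M[R]_p).
Proof. by move=> a0 i j; rewrite mxE mulrn_wge0. Qed.

Lemma hadamard_edivE p q (U N D : 'M[R]_(p, q)) a i :
  hadamard U (ediv N D) a i = U a i * (N a i / D a i).
Proof. by rewrite !mxE. Qed.

Lemma mulmx3E p q (L : 'M[R]_p) (Y : 'M[R]_(p, q)) (P : 'M[R]_q) a i :
  (L *m Y *m P) a i = \sum_b \sum_j L a b * Y b j * P j i.
Proof. by rewrite mxE exchange_big /=; apply: eq_bigr => j _; rewrite mxE mulr_suml. Qed.

Lemma sum_sym_cross_le (T : finType) (F : T -> T -> R) (t : T -> R) :
  (forall x y, 0 <= F x y) -> (forall x y, F x y = F y x) ->
  \sum_x \sum_y F x y * (t x * t y) <= \sum_x \sum_y F x y * t x ^+ 2.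
Proof.
move=> F0 Fsym.
have swap : \sum_x \sum_y F x y * t y ^+ 2 = \sum_x \sum_y F x y * t x ^+ 2.
  by rewrite exchange_big /=; apply: eq_bigr => x _; apply: eq_bigr => y _; rewrite Fsym.
have sum_le : (\sum_x \sum_y F x y * (t x * t y)) *+ 2 <=
    \sum_x \sum_y (F x y * t x ^+ 2 + F x y * t y ^+ 2).
  rewrite -sumrMnl; apply: ler_sum => x _; rewrite -sumrMnl; apply: ler_sum => y _.
  have := F0 x y; have := sqr_ge0 (t x - t y); nra.
rewrite -(ler_pMn2r (n := 2)) // (le_trans sum_le) //.
rewrite mulr2n -[X in _ + X]swap -big_split /=.
by under eq_bigr do rewrite big_split.
Qed.

Section QuadraticForm.
Context {p q : nat} (L : 'M[R]_p) (P : 'M[R]_q) (B : 'M[R]_(p, q)).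

Definition mxquad (Y : 'M[R]_(p, q)) : R := mxdot Y (L *m Y *m P) - 2 * mxdot Y B.

Hypotheses (Lsym : L^T = L) (Psym : P^T = P).
Hypotheses (L0 : mx_nonneg L) (P0 : mx_nonneg P).
Variable U : 'M[R]_(p, q).
Hypothesis U0 : mx_nonneg U.

Let D := L *m U *m P.

Lemma mxdot_hadamard_le (t : 'M[R]_(p, q)) :
  mxdot (hadamard U t) (L *m hadamard U t *m P) <=
  \sum_a \sum_i t a i ^+ 2 * (U a i * D a i).
Proof.
pose w a i b j := U a i * L a b * U b j * P j i.
have -> : mxdot (hadamard U t) (L *m hadamard U t *m P) =
    \sum_a \sum_i \sum_b \sum_j w a i b j * (t a i * t b j).
  rewrite mxdotE; apply: eq_bigr => a _; apply: eq_bigr => i _.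
  rewrite mulmx3E mulr_sumr; apply: eq_bigr => b _.
  by rewrite mulr_sumr; apply: eq_bigr => j _; rewrite !mxE /w; ring.
have -> : \sum_a \sum_i t a i ^+ 2 * (U a i * D a i) =
    \sum_a \sum_i \sum_b \sum_j w a i b j * t a i ^+ 2.
  apply: eq_bigr => a _; apply: eq_bigr => i _.
  rewrite mulmx3E !mulr_sumr; apply: eq_bigr => b _.
  by rewrite !mulr_sumr; apply: eq_bigr => j _; rewrite /w; ring.
have pair4 (G : 'I_p -> 'I_q -> 'I_p -> 'I_q -> R) :
    \sum_a \sum_i \sum_b \sum_j G a i b j =
    \sum_(x : 'I_p * 'I_q) \sum_(y : 'I_p * 'I_q) G x.1 x.2 y.1 y.2.
  by rewrite pair_bigA; apply: eq_bigr => x _; rewrite pair_bigA.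
rewrite !pair4.
apply: (@sum_sym_cross_le _ (fun x y => w x.1 x.2 y.1 y.2) (fun x => t x.1 x.2)).
  by move=> x y; rewrite /w !mulr_ge0.
move=> x y; rewrite /w -{1}Lsym -{1}Psym !mxE; ring.
Qed.

Lemma mxquad_update_le :
  mx_pos D -> mxquad (hadamard U (ediv B D)) <= mxquad U.
Proof.
move=> Dpos; rewrite /mxquad.
apply: le_trans (lerD (mxdot_hadamard_le (ediv B D)) (lexx _)) _.
rewrite !mxdotE !mulr_sumr -!sumrN -!big_split /=.
apply: ler_sum => a _; rewrite !mulr_sumr -!sumrN -!big_split /=.
apply: ler_sum => i _; rewrite hadamard_edivE mxE -/D.
have Dai := Dpos a i; have Uai := U0 a i.
have -> : (B a i / D a i) ^+ 2 * (U a i * D a i) - 2 * (U a i * (B a i / D a i) * B a i)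
   = U a i * D a i - 2 * (U a i * B a i) - U a i * ((D a i - B a i) ^+ 2 / D a i).
  by field; rewrite gt_eqF.
by rewrite lerBlDr lerDl mulr_ge0 // divr_ge0 ?sqr_ge0 ?ltW.
Qed.

Lemma hadamard_ediv_nonneg :
  mx_nonneg B -> mx_pos D -> mx_nonneg (hadamard U (ediv B D)).
Proof.
move=> B0 Dpos a i; rewrite hadamard_edivE mulr_ge0 // divr_ge0 //; exact: ltW.
Qed.

End QuadraticForm.

Section Objective.
Context {k m n r : nat} (A : 'M[R]_(k, m)) (X : 'M[R]_(m, n)) (lam sigma : R).

Definition gram_pen : 'M[R]_m := A^T *m A + sigma *: (ones m *m (ones m)^T).
Definition gram_reg : 'M[R]_m := gram_pen + lam%:M.

Lemma gram_pen_sym : gram_pen^T = gram_pen.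
Proof. by rewrite /gram_pen linearD /= linearZ /= !trmx_mul !trmxK. Qed.

Lemma gram_reg_sym : gram_reg^T = gram_reg.
Proof. by rewrite /gram_reg linearD /= gram_pen_sym tr_scalar_mx. Qed.

Hypothesis sigma_ge : forall a b, negpart ((A^T *m A) a b) <= sigma.

Lemma gram_pen_nonneg : mx_nonneg gram_pen.
Proof.
move=> a b; rewrite !mxE big_ord1 !mxE mulr1.
have := sigma_ge a b; rewrite /negpart mxE.
have : Num.min ((A^T *m A) a b) 0 <= (A^T *m A) a b by rewrite ge_min lexx.
by rewrite mxE; move: (Num.min _ _) => z; lra.
Qed.

Lemma gram_reg_nonneg : 0 <= lam -> mx_nonneg gram_reg.
Proof.
move=> lam0 a b; rewrite mxE addr_ge0 ?gram_pen_nonneg //.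
exact: mx_nonneg_scalar.
Qed.

Lemma objectiveE (U : 'M[R]_(m, r)) (V : 'M[R]_(n, r)) :
  objective A X lam sigma U V = mxdot X (gram_pen *m X) +
   (mxdot (U *m V^T) (gram_reg *m (U *m V^T))
    - 2 * mxdot (U *m V^T) (gram_pen *m X)).
Proof.
rewrite /objective !frob2_mxdot; set W := U *m V^T; clearbody W.
rewrite (mxdot_mull _ _ _ A) (mxdot_mull _ _ _ (ones m)^T) trmxK !mulmxA.
rewrite -addrA [lam * _ + _]addrC addrA.
have -> : mxdot (X - W) (A^T *m A *m (X - W)) +
    sigma * mxdot (X - W) (ones m *m (ones m)^T *m (X - W)) =
    mxdot (X - W) (gram_pen *m (X - W)).
  by rewrite mulmxDl -scalemxAl mxdotDr mxdotZr.
have sym : mxdot X (gram_pen *m W) = mxdot W (gram_pen *m X).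
  by rewrite mxdotC mxdot_mull gram_pen_sym.
rewrite /gram_reg [(_ + lam%:M) *m _]mulmxDl mul_scalar_mx mxdotDr mxdotZr.
rewrite mulmxBr mxdotDl mxdotNl !mxdotDr !mxdotNr sym; ring.
Qed.

Lemma objective_in_U (U : 'M[R]_(m, r)) (V : 'M[R]_(n, r)) :
  objective A X lam sigma U V = mxdot X (gram_pen *m X) +
   mxquad gram_reg (V^T *m V) (gram_pen *m X *m V) U.
Proof. by rewrite objectiveE /mxquad !mxdot_mulr trmxK !mulmxA. Qed.

Lemma objective_in_V (U : 'M[R]_(m, r)) (V : 'M[R]_(n, r)) :
  objective A X lam sigma U V = mxdot X (gram_pen *m X) +
   mxquad 1%:M (U^T *m gram_reg *m U) (X^T *m gram_pen *m U) V.
Proof.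
have Ut (Y : 'M[R]_(n, r)) Z : mxdot (U *m Y^T) Z = mxdot Y (Z^T *m U).
  by rewrite mxdot_mull mxdot_trl trmx_mul trmxK.
by rewrite objectiveE /mxquad !Ut !trmx_mul gram_reg_sym gram_pen_sym trmxK mul1mx !mulmxA.
Qed.

Lemma numUE (U : 'M[R]_(m, r)) (V : 'M[R]_(n, r)) :
  numU A X lam sigma U V = gram_pen *m X *m V.
Proof. by rewrite /numU /gram_pen !mulmxDl -!scalemxAl. Qed.

Lemma denUE (U : 'M[R]_(m, r)) (V : 'M[R]_(n, r)) :
  denU A X lam sigma U V = gram_reg *m U *m (V^T *m V).
Proof.
by rewrite /denU /gram_reg /gram_pen !mulmxDl -!scalemxAl mul_scalar_mx -scalemxAl !mulmxA.
Qed.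

Lemma numVE (U : 'M[R]_(m, r)) (V : 'M[R]_(n, r)) :
  numV A X lam sigma U V = X^T *m gram_pen *m U.
Proof. by rewrite /numV /gram_pen !mulmxDr !mulmxDl -!scalemxAr -!scalemxAl !mulmxA. Qed.

Lemma denVE (U : 'M[R]_(m, r)) (V : 'M[R]_(n, r)) :
  denV A X lam sigma U V = 1%:M *m V *m (U^T *m gram_reg *m U).
Proof.
rewrite /denV /gram_reg /gram_pen mul1mx !(mulmxDl, mulmxDr) mul_mx_scalar.
by rewrite -!scalemxAl -!scalemxAr -?scalemxAl -?scalemxAr !mulmxA.
Qed.

End Objective.
End MultiplicativeUpdate.

Theorem mainTheorem10 (R : realFieldType) (k m n r : nat)
  (A : 'M[R]_(k, m)) (X : 'M[R]_(m, n)) (lam sigma : R)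
  (U : 'M[R]_(m, r)) (V : 'M[R]_(n, r)) :
  mx_nonneg X ->
  0 <= lam <= 1 ->
  0 <= sigma ->
  (forall a b, negpart ((A^T *m A) a b) <= sigma) ->
  mx_nonneg U -> mx_nonneg V ->
  (mx_pos (denU A X lam sigma U V) ->
     mx_nonneg (updU A X lam sigma U V) /\
     objective A X lam sigma (updU A X lam sigma U V) V
       <= objective A X lam sigma U V) /\
  (mx_pos (denV A X lam sigma U V) ->
     mx_nonneg (updV A X lam sigma U V) /\
     objective A X lam sigma U (updV A X lam sigma U V)
       <= objective A X lam sigma U V).
Proof.
move=> X0 /andP[lam0 _] _ sigma_ge U0 V0.
have Q0 := gram_pen_nonneg _ _ sigma_ge.
have L0 := gram_reg_nonneg _ _ _ sigma_ge lam0.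
split=> Dpos; rewrite /updU /updV ?numUE ?denUE ?numVE ?denVE in Dpos *.
  split.
    by apply: hadamard_ediv_nonneg => //; apply: mx_nonneg_mul => //; apply: mx_nonneg_mul.
  rewrite !objective_in_U lerD2l; apply: mxquad_update_le => //.
  - exact: gram_reg_sym.
  - by rewrite trmx_mul trmxK.
  - by apply: mx_nonneg_mul => //; apply: mx_nonneg_tr.
split.
  apply: hadamard_ediv_nonneg => //.
  by apply: mx_nonneg_mul => //; apply: mx_nonneg_mul => //; apply: mx_nonneg_tr.
rewrite !objective_in_V lerD2l; apply: mxquad_update_le => //.
- exact: tr_scalar_mx.
- by rewrite !trmx_mul gram_reg_sym trmxK mulmxA.
- exact: mx_nonneg_scalar.
- by apply: mx_nonneg_mul => //; apply: mx_nonneg_mul => //; apply: mx_nonneg_tr.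
Qed.
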